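(* Let $r,m\ge1$, let $\xi$ be an $F^r$-stable irreducible character of $G^{F^{rm}}$ and $\tilde\xi$ any extension of $\xi$ to $G^{F^{rm}}\langle\sigma^r\rangle$. Let $R^{(m)}_{\tilde\xi}=Sh_{F^{rm}/F^r}(f)$, where $f\in C(G^{F^{rm}}/{\sim_{F^r}})$ is $f(x)=\tilde\xi(x\sigma^r)$; this is a class function on $G^{F^r}$. Then $$|G^{F^{rm}}|^{-1}\sum_{\hat g\in G^{F^{rm}}}\tilde\xi(N_r(\hat g)\sigma^r)=|G^F|^{-1}\sum_{g\in G^F}R^{(m)}_{\tilde\xi}(g).$$
   Context: $G$ is a connected algebraic group defined over $\mathbb F_q$ with Frobenius map $F$. For a finite group $\Gamma$ with automorphism $\phi$, $\Gamma/{\sim_\phi}$ is the set of $\phi$-twisted conjugacy classes ($x\sim z^{-1}x\phi(z)$), and $C(Y)$ is the space of $\bar{\mathbb Q}_\ell$-valued functions on $Y$. Norm map: for commuting Frobenius maps $F_1,F_2$ on a connected group $X$ and $x\in X^{F_1}$, choose $\alpha\in X$ with $x=\alpha^{-1}F_2(\alpha)$ and put $x'=F_1(\alpha)\alpha^{-1}\in X^{F_2}$; this induces a bijection $N_{F_1/F_2}:X^{F_1}/{\sim_{F_2}}\to X^{F_2}/{\sim_{F_1^{-1}}}$. Shintani descent $Sh_{F_1/F_2}:C(X^{F_1}/{\sim_{F_2}})\to C(X^{F_2}/{\sim_{F_1^{-1}}})$ is $Sh_{F_1/F_2}(f)(N_{F_1/F_2}(x))=f(x)$. Here $F_1=F^{rm}$,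 $F_2=F^r$, and $F^{rm}$ acts trivially on $G^{F^r}$, so the target is the space of class functions on $G^{F^r}$. $\sigma=F|_{G^{F^{rm}}}$, $G^{F^{rm}}\langle\sigma\rangle$ is the semidirect product with the cyclic group of order $rm$ generated by $\sigma$ ($\sigma g\sigma^{-1}=F(g)$), and $G^{F^{rm}}\langle\sigma^r\rangle$ its subgroup generated by $G^{F^{rm}}$ and $\sigma^r$. For $x\in G^{F^{rm}}$, $N_k(x)=xF(x)\cdots F^{k-1}(x)$. *)

From HB Require Import structures.
From mathcomp Require Import boolp.
From mathcomp Require Import all_boot all_order all_algebra all_fingroup.
From mathcomp Require Import all_solvable all_field all_character.
Set Implicit Arguments. Unset Strict Implicit. Unset Printing Implicit Defensive.
Import GRing.Theory Num.Theory.

Definition frobenius_datum (T : groupType) (F : T -> T) : Prop :=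
  [/\ {morph F : x y / (x * y)%g},
      bijective F,
      (* Lang's theorem for every power F^k, k >= 1 *)
      (forall k, 0 < k -> forall x : T, exists a : T, x = (a^-1 * iter k F a)%g),
      (* every point is rational over some finite extension *)
      (forall t : T, exists2 k, 0 < k & iter k F t = t)
    &
      (forall k, 0 < k -> exists s : seq T, forall t, iter k F t = t -> t \in s)].

(* sigma g sigma^-1 = F(g) inside the finite group gT, where sigma = s *)
Definition frobK (gT : finGroupType) (s g : gT) : gT := (g ^ s^-1)%g.

Definition normK (gT : finGroupType) (s : gT) (k : nat) (x : gT) : gT :=
  (\prod_(i < k) iter i (frobK s) x)%g.

(* Fixed points of F^k (as a subset of the model K of G^{F^{rm}}) *)
Definition fixedK (T : groupType) (gT : finGroupType) (F : T -> T)
    (iota : gT -> T) (K : {set gT}) (k : nat) : {set gT} :=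
  [set g in K | iter k F (iota g) == iota g].

(* Shintani descent Sh_{F^{rm}/F^r}(f): its value at y = N(x) is f(x), where
   N(x) = F^{rm}(a) a^-1 for any a with x = a^-1 F^r(a). *)
Definition shintani (T : groupType) (gT : finGroupType) (F : T -> T)
    (iota : gT -> T) (K : {set gT}) (r m : nat) (f : gT -> algC) (y : gT)
    : algC :=
  if [pick x in K | `[< exists a : T,
        iota x = (a^-1 * iter r F a)%g /\
        iota y = (iter (r * m) F a * a^-1)%g >]] is Some x
  then f x else 0%R.

From HB Require Import structures.
From mathcomp Require Import boolp.
From mathcomp Require Import all_boot all_order all_algebra all_fingroup.
From mathcomp Require Import all_solvable all_field all_character.
Import GRing.Theory Num.Theory.

Set Implicit Arguments.
Unset Strict Implicit.

(* Double counting along an explicit bijection.  Write x ∈ G^{F^{rm}} as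
   x = a^-1 F(a) (Lang).  For u ∈ G^F the element u a solves the same equation,
   and (u, x) ↦ (c, y) with y = F^{rm}(u a) (u a)^-1 ∈ G^F and c = b^-1 u a ∈
   G^{F^{rm}}, where b is a fixed Lang solution of y = F^{rm}(b) b^-1, is a
   bijection G^F × G^{F^{rm}} → G^{F^{rm}} × G^F.  Since N_r(x) = a^-1 F^r(a)
   and the Shintani descent of x ↦ ξ~(x σ^r) at y = F^{rm}(a) a^-1 is
   ξ~(N_r(x) σ^r), both sides of the identity, multiplied by |G^F| |G^{F^{rm}}|,
   are the same sum over the pairs. *)

Section GroupEndomorphism.
Variables (T : groupType) (f : T -> T).
Hypothesis fM : {morph f : x y / (x * y)%g}.

Lemma gmorph1 : f 1%g = 1%g.
Proof. by apply: (@mulgI _ (f 1%g)); rewrite -fM !mulg1. Qed.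

Lemma gmorphV x : f x^-1%g = (f x)^-1%g.
Proof. by apply: (@mulgI _ (f x)); rewrite -fM !mulgV gmorph1. Qed.

Lemma iter_gmorph n : {morph iter n f : x y / (x * y)%g}.
Proof. by move=> x y; elim: n => //= n ->; rewrite fM. Qed.

Lemma iter_gmorphV n x : iter n f x^-1%g = (iter n f x)^-1%g.
Proof. by elim: n => //= n ->; rewrite gmorphV. Qed.

Lemma prod_iter_lang a i :
  (\prod_(j < i) iter j f (a^-1 * f a) = a^-1 * iter i f a)%g.
Proof.
elim: i => [|i IH]; first by rewrite big_ord0 mulVg.
rewrite big_ord_recr /= IH iter_gmorph iter_gmorphV.
by rewrite -iterSr iterS mulgA mulgK.
Qed.

Lemma twisted_fixed_mulVg a b :
  (f a * a^-1 = f b * b^-1)%g -> f (a^-1 * b)%g = (a^-1 * b)%g.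
Proof.
move=> eab; rewrite fM gmorphV -[f b](mulgKV b) -eab.
by rewrite !mulgA mulVg mul1g.
Qed.

End GroupEndomorphism.

Lemma sum_setX (R : nmodType) (I J : finType) (A : {set I}) (B : {set J})
    (G : I * J -> R) :
  (\sum_(p in setX A B) G p = \sum_(a in A) \sum_(b in B) G (a, b))%R.
Proof. by rewrite pair_big; apply: eq_big => [[a b]|[a b] _]; rewrite ?in_setX. Qed.

Section ShintaniDescent.
Variables (T : groupType) (F : T -> T) (r m : nat).
Variables (gT : finGroupType) (K : {group gT}) (s : gT) (iota : gT -> T).

Hypothesis FM : {morph F : x y / (x * y)%g}.
Hypothesis lang : forall k, 0 < k -> forall x : T, exists a : T, x = (a^-1 * iter k F a)%g.
Hypotheses (r_gt0 : 0 < r) (m_gt0 : 0 < m).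
Hypothesis sN : s \in 'N(K)%g.
Hypothesis iotaM : {in K &, {morph iota : x y / (x * y)%g}}.
Hypothesis iota_inj : {in K &, injective iota}.
Hypothesis iota_im :
  forall t : T, iter (r * m) F t = t <-> exists2 k, k \in K & iota k = t.
Hypothesis iotaF : {in K, forall k, iota (frobK s k) = F (iota k)}.

Lemma iota1 : iota 1%g = 1%g.
Proof. by apply: (@mulgI _ (iota 1%g)); rewrite -iotaM ?group1 // !mulg1. Qed.

Lemma iotaV : {in K, forall k, iota k^-1 = (iota k)^-1}%g.
Proof.
by move=> k kK; apply: (@mulgI _ (iota k)); rewrite -iotaM ?groupV // !mulgV iota1.
Qed.

Lemma iter_frobKE i k : iter i (frobK s) k = (k ^ (s ^+ i)^-1)%g.
Proof.
elim: i => [|i IH] /=; first by rewrite invg1 conjg1.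
by rewrite IH /frobK expgS invMg conjgM.
Qed.

Lemma iter_frobK_in i k : k \in K -> iter i (frobK s) k \in K.
Proof. by move=> kK; rewrite iter_frobKE memJ_norm ?groupV ?groupX. Qed.

Lemma iota_iter_frobK i k : k \in K -> iota (iter i (frobK s) k) = iter i F (iota k).
Proof. by move=> kK; elim: i => //= i <-; rewrite iotaF ?iter_frobK_in. Qed.

Lemma normK_in i x : x \in K -> normK s i x \in K.
Proof. by move=> xK; apply: group_prod => j _; apply: iter_frobK_in. Qed.

Lemma iota_normK i x : x \in K ->
  iota (normK s i x) = (\prod_(j < i) iter j F (iota x))%g.
Proof.
move=> xK; elim: i => [|i IH]; first by rewrite /normK !big_ord0 iota1.
rewrite /normK !big_ord_recr /= iotaM ?iter_frobK_in //; last exact: normK_in.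
by rewrite IH iota_iter_frobK.
Qed.

Lemma iota_normK_lang i x a : x \in K -> iota x = (a^-1 * F a)%g ->
  iota (normK s i x) = (a^-1 * iter i F a)%g.
Proof. by move=> xK ex; rewrite iota_normK // ex prod_iter_lang. Qed.

Lemma fixed_iota_in t : iter (r * m) F t = t -> exists2 k, k \in K & iota k = t.
Proof. exact: (iota_im t).1. Qed.

Variable phi : 'CF(K <*> <[s ^+ r]>)%g.

Let f (x : gT) := phi (x * s ^+ r)%g.

(* Two Lang solutions of y = F^{rm}(a) a^-1 differ by an element k of
   G^{F^{rm}}, which conjugates the corresponding norms into each other. *)
Lemma shintani_normK y x a : y \in K -> x \in K ->
    iota x = (a^-1 * F a)%g -> iota y = (iter (r * m) F a * a^-1)%g ->
  shintani F iota K r m f y = f (normK s r x).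
Proof.
move=> yK xK ex ey; rewrite /shintani.
case: pickP => [x' /andP[x'K /asboolP [a' [ex' ey']]] | none]; last first.
  have /negP[] := none (normK s r x); rewrite normK_in //=.
  by apply/asboolP; exists a; rewrite (iota_normK_lang _ xK ex).
have /fixed_iota_in[k kK ek] : iter (r * m) F (a^-1 * a')%g = (a^-1 * a')%g.
  by apply: (twisted_fixed_mulVg (iter_gmorph FM (r * m))); rewrite -ey -ey'.
have ex'k : x' = (k^-1 * normK s r x * iter r (frobK s) k)%g.
  apply: iota_inj; rewrite ?groupM ?groupV ?normK_in ?iter_frobK_in //.
  rewrite !iotaM ?groupM ?groupV ?normK_in ?iter_frobK_in //.
  rewrite iotaV // iota_iter_frobK // (iota_normK_lang _ xK ex) ek ex'.
  by rewrite iter_gmorph // iter_gmorphV // invMg invgK !mulgA !mulgK.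
rewrite /f; have -> : (x' * s ^+ r = (normK s r x * s ^+ r) ^ k)%g.
  by rewrite ex'k iter_frobKE /conjg invgK !mulgA mulgKV.
by rewrite cfunJ // (subsetP (joing_subl _ _)).
Qed.

Local Notation GF := (fixedK F iota K 1).

Lemma fixedK1P u : reflect (u \in K /\ F (iota u) = iota u) (u \in GF).
Proof. by rewrite inE; apply: (iffP andP) => -[-> /eqP]. Qed.

Lemma rm_gt0 : 0 < r * m.
Proof. by rewrite muln_gt0 r_gt0 m_gt0. Qed.

Definition lang_root (x : gT) : T := proj1_sig (cid (@lang 1 isT (iota x))).

Lemma lang_rootP x : iota x = ((lang_root x)^-1 * F (lang_root x))%g.
Proof. by rewrite /lang_root; case: cid. Qed.

Definition shintani_root (y : gT) : T :=
  ((proj1_sig (cid (lang rm_gt0 (iota y)^-1%g)))^-1)%g.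

Lemma shintani_rootP y :
  iota y = (iter (r * m) F (shintani_root y) * (shintani_root y)^-1)%g.
Proof.
rewrite /shintani_root; case: cid => b /= eb.
by rewrite iter_gmorphV // invgK -[iota y]invgK eb invMg invgK.
Qed.

Definition iota_inv (t : T) : gT := odflt 1%g [pick k in K | `[< iota k = t >]].

Lemma iota_invP t : iter (r * m) F t = t -> iota_inv t \in K /\ iota (iota_inv t) = t.
Proof.
move=> /fixed_iota_in[k kK ek]; rewrite /iota_inv.
case: pickP => [k' /andP[k'K /asboolP ->] //| none].
by have /negP[] := none k; rewrite kK /=; apply/asboolP.
Qed.

Definition shintani_pair (p : gT * gT) : gT * gT :=
  let a := (iota p.1 * lang_root p.2)%g in
  let y := iota_inv (iter (r * m) F a * a^-1)%g in
  (iota_inv ((shintani_root y)^-1 * a)%g, y).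

Lemma shintani_pairP u x : u \in GF -> x \in K ->
  let a := (iota u * lang_root x)%g in
  let p := shintani_pair (u, x) in
  [/\ iota x = (a^-1 * F a)%g,
      p.2 \in GF, iota p.2 = (iter (r * m) F a * a^-1)%g,
      p.1 \in K & iota p.1 = ((shintani_root p.2)^-1 * a)%g].
Proof.
move=> /fixedK1P[uK Fu] xK a p.
have ex : iota x = (a^-1 * F a)%g by rewrite FM invMg Fu -mulgA mulKg -lang_rootP.
set t := (iter (r * m) F a * a^-1)%g.
have Ft : F t = t.
  have Fa : F a = (a * iota x)%g by rewrite ex mulKVg.
  have Fnx : iter (r * m) F (iota x) = iota x by apply/(iota_im _).2; exists x.
  rewrite FM (gmorphV FM) -iterS iterSr Fa iter_gmorph // Fnx invMg.
  by rewrite mulgA mulgK.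
have Fnt : iter (r * m) F t = t by elim: (r * m) => //= j ->.
have [yK ey] := iota_invP Fnt.
have yGF : p.2 \in GF by apply/fixedK1P; rewrite /= ey.
have Fc : iter (r * m) F ((shintani_root p.2)^-1 * a)%g =
          ((shintani_root p.2)^-1 * a)%g.
  by apply: (twisted_fixed_mulVg (iter_gmorph FM (r * m))); rewrite -shintani_rootP.
by have [cK ec] := iota_invP Fc.
Qed.

Lemma shintani_pair_in p : p \in setX GF K -> shintani_pair p \in setX K GF.
Proof.
case: p => u x /setXP[uGF xK]; have [_ yGF _ cK _] := shintani_pairP uGF xK.
by case: shintani_pair yGF cK => c y /= yGF cK; rewrite in_setX cK yGF.
Qed.

Lemma shintani_pair_inj : {in setX GF K &, injective shintani_pair}.
Proof.
move=> [u1 x1] [u2 x2] /setXP[u1GF x1K] /setXP[u2GF x2K] E.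
have [e1 _ _ _ ec1] := shintani_pairP u1GF x1K.
have [e2 _ _ _ ec2] := shintani_pairP u2GF x2K.
rewrite E ec2 in ec1; have ea := esym (mulgI _ _ _ ec1).
have ex : x1 = x2 by apply: iota_inj => //; rewrite e1 e2 ea.
rewrite ex in ea; have /fixedK1P[u1K _] := u1GF; have /fixedK1P[u2K _] := u2GF.
by rewrite (iota_inj u1K u2K (mulIg _ _ _ ea)) ex.
Qed.

Lemma shintani_pair_onto : [set shintani_pair p | p in setX GF K] = setX K GF.
Proof.
apply/eqP; rewrite eqEcard card_in_imset; last exact: shintani_pair_inj.
rewrite !cardsX mulnC leqnn andbT.
by apply/subsetP => q /imsetP[p pA ->]; apply: shintani_pair_in.
Qed.

Lemma sum_normK_shintani :
  (#|GF|%:R * \sum_(x in K) f (normK s r x) =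
   #|K|%:R * \sum_(y in GF) shintani F iota K r m f y :> algC)%R.
Proof.
have sum_fst (A B : {set gT}) (h : gT -> algC) :
    (\sum_(p in setX A B) h p.2 = #|A|%:R * \sum_(b in B) h b)%R.
  by rewrite sum_setX /= sumr_const mulr_natl.
rewrite -(sum_fst GF K) -(sum_fst K GF) -shintani_pair_onto big_imset /=; last first.
  exact: shintani_pair_inj.
apply: eq_bigr => -[u x] /setXP[uGF xK].
have [ex /fixedK1P[yK _] ey _ _] := shintani_pairP uGF xK.
by rewrite (shintani_normK yK xK ex ey).
Qed.

End ShintaniDescent.

Unset Implicit Arguments.

Theorem proposition1p9
  (T : groupType) (F : T -> T) (hF : frobenius_datum F)
  (r m : nat) (hr : 0 < r) (hm : 0 < m)
  (gT : finGroupType) (K : {group gT}) (s : gT) (iota : gT -> T)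
  (hsN : s \in 'N(K)%g) (hs_ord : #[s]%g = (r * m)%N)
  (hKs : (K :&: <[s]> = 1)%g)
  (hiota_morph : {in K &, {morph iota : x y / (x * y)%g}})
  (hiota_inj : {in K &, injective iota})
  (hiota_im : forall t : T, iter (r * m) F t = t <-> exists2 k, k \in K & iota k = t)
  (hiota_F : {in K, forall k, iota (frobK s k) = F (iota k)})
  (xi : 'CF(K)) (hxi : xi \in irr K)
  (hxi_stable : {in K, forall x, xi (iter r (frobK s) x) = xi x})
  (xit : 'CF(K <*> <[s ^+ r]>)%g) (hxit : xit \is a character)
  (hxit_ext : ('Res[K] xit)%R = xi) :
  ((#|K|%:R)^-1 * \sum_(g in K) xit (normK s r g * s ^+ r)%g =
   (#|fixedK F iota K 1|%:R)^-1 *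
     \sum_(g in fixedK F iota K 1)
        shintani F iota K r m (fun x => xit (x * s ^+ r)%g) g)%R.
Proof.
case: hF => FM _ lang _ _.
have K_gt0 : (#|K|%:R != 0 :> algC)%R by rewrite pnatr_eq0 -lt0n cardG_gt0.
have GF_gt0 : (#|fixedK F iota K 1|%:R != 0 :> algC)%R.
  rewrite pnatr_eq0 -lt0n; apply/card_gt0P; exists 1%g.
  by rewrite inE group1 /= (iota1 hiota_morph) gmorph1.
apply: (mulfI K_gt0); apply: (mulfI GF_gt0).
rewrite mulVKf // [RHS]mulrCA mulVKf //.
exact: sum_normK_shintani FM lang hr hm hsN hiota_morph hiota_inj hiota_im hiota_F xit.
Qed.
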